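(* Let $m,n,p,q$ be positive integers and $G=K_{m,n}\vee K_{p,q}$. Then $$\tau(G)=(m+n+p+q)^2(m+p+q)^{n-1}(n+p+q)^{m-1}(p+m+n)^{q-1}(q+m+n)^{p-1}.$$
   Context: $K_{m,n}$ is the complete bipartite graph with parts of sizes $m$ and $n$. The join $G_1\vee G_2$ has vertex set $V(G_1)\sqcup V(G_2)$ and edge set $E(G_1)\cup E(G_2)\cup\{uv:u\in V(G_1),v\in V(G_2)\}$. $\tau(G)$ is the number of spanning trees of $G$. *)

(* Simple graphs on a finType V given by a symmetric,
   irreflexive adjacency relation e : rel V. *)
From mathcomp Require Import all_boot.
Set Implicit Arguments. Unset Strict Implicit. Unset Printing Implicit Defensive.

Definition kbip_rel (m n : nat) : rel ('I_m + 'I_n)%type :=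
  fun x y => match x, y with
             | inl _, inr _ | inr _, inl _ => true
             | _, _ => false
             end.

Arguments kbip_rel m n : clear implicits.

Definition join_rel (V1 V2 : finType) (e1 : rel V1) (e2 : rel V2)
  : rel (V1 + V2)%type :=
  fun x y => match x, y with
             | inl a, inl b => e1 a b
             | inr a, inr b => e2 a b
             | _, _ => true
             end.

Section Trees.
Variable V : finType.

Definition edge_set (e : rel V) : {set {set V}} :=
  [set A : {set V} | [exists x, exists y, e x y && (A == [set x; y])]].

Definition sub_adj (F : {set {set V}}) : rel V :=
  fun x y => (x != y) && ([set x; y] \in F).

Definition sub_connected (F : {set {set V}}) : bool :=
  [forall x, forall y, connect (sub_adj F) x y].

(* (V, F) is acyclic: no cycle x_0 x_1 ... x_{k-1} x_0 with k >= 3 distinct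
   vertices (distinct vertices force k <= #|V|). *)
Definition sub_acyclic (F : {set {set V}}) : bool :=
  [forall k : 'I_#|V|.+1, forall t : k.-tuple V,
     ~~ [&& 2 < k, uniq t & cycle (sub_adj F) t]].

Definition spanning_tree (e : rel V) (F : {set {set V}}) : bool :=
  [&& F \subset edge_set e, sub_connected F & sub_acyclic F].

Definition tau (e : rel V) : nat := #|[set F | spanning_tree e F]|.
End Trees.

From mathcomp Require Import all_boot all_fingroup all_algebra zify ring.
Set Implicit Arguments. Unset Strict Implicit. Unset Printing Implicit Defensive.

(* Orienting the edges of a spanning tree towards a root r turns it into a
   parent map: f r = r, each f v is a neighbour of v, and iterating f sends
   every vertex to r.  Row x <> r of the Laplacian with row and column r
   deleted is the sum, over the neighbours w of x, of e_x - e_w (where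
   e_r := 0), so by multilinearity its determinant is a sum over all maps g
   choosing a neighbour of each vertex; the summand is 1 when g is a parent
   map and 0 when g has a cycle avoiding r.  K_{m,n} \/ K_{p,q} is the
   complete 4-partite graph with parts of sizes m, n, p, q, whose reduced
   Laplacian is diagonal minus a product of a #|V| x 4 and a 4 x #|V|
   matrix; Sylvester's identity det (1 - AB) = det (1 - BA) reduces its
   determinant to a 4 x 4 one, which is again diagonal minus rank one. *)

Lemma set2_eq (T : finType) (a b c d : T) :
  [set a; b] = [set c; d] -> (a = c /\ b = d) \/ (a = d /\ b = c).
Proof.
move=> E.
have ha : a \in [set c; d] by rewrite -E set21.
have hb : b \in [set c; d] by rewrite -E set22.
have hc : c \in [set a; b] by rewrite E set21.
have hd : d \in [set a; b] by rewrite E set22.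
case/set2P: ha => ea; case/set2P: hb => eb; subst; auto;
  case/set2P: hc => ec; case/set2P: hd => ed; subst; auto.
Qed.

Lemma connect_iter (T : finType) (e : rel T) (f : T -> T) (r : T) :
  f r = r -> (forall v, v != r -> e v (f v)) ->
  forall k v, connect e v (iter k f v).
Proof.
move=> fr efv; elim=> [|k IHk] v /=; first exact: connect0.
apply: connect_trans (IHk v) _.
have [->|ne] := eqVneq (iter k f v) r; first by rewrite fr connect0.
exact/connect1/efv.
Qed.

Lemma iter_card_fix (T : finType) (g : T -> T) (z x : T) j :
  g z = z -> iter j g x = z -> iter #|T| g x = z.
Proof.
move=> gz xz; have : fconnect g x z by rewrite -xz fconnect_iter.
rewrite fconnect_orbit => /trajectP[i ilt zi].
have ile : i <= #|T| by apply: ltnW; apply: leq_trans ilt (max_card _).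
by rewrite -(subnK ile) iterD -zi iter_fix.
Qed.

Section ParentMaps.
Variables (V : finType) (e : rel V) (r : V).
Hypothesis e_irr : irreflexive e.

Definition parent_map (f : {ffun V -> V}) : bool :=
  [&& f r == r, [forall v, (v != r) ==> e v (f v)] & [forall v, iter #|V| f v == r]].

Definition parent_edges (f : {ffun V -> V}) : {set {set V}} :=
  [set [set v; f v] | v in [set~ r]].

Definition depth (f : V -> V) (v : V) : nat := \sum_(j < #|V|) (iter j f v != r).

Let cardV_gt0 : 0 < #|V|. Proof. by apply/card_gt0P; exists r. Qed.

Lemma parent_mapP (f : {ffun V -> V}) :
  reflect [/\ f r = r, forall v, v != r -> e v (f v) & forall v, iter #|V| f v = r]
          (parent_map f).
Proof.
apply: (iffP and3P) => [[/eqP fr /forallP fe /forallP fK]|[fr fe fK]].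
  by split=> // [v|v]; [apply/implyP: (fe v) | apply/eqP].
by split; [apply/eqP | apply/forallP=> v; apply/implyP/fe | apply/forallP=> v; apply/eqP].
Qed.

Lemma parent_edgesP (f : {ffun V -> V}) A :
  reflect (exists2 u, u != r & A = [set u; f u]) (A \in parent_edges f).
Proof.
apply: (iffP imsetP) => [[u]|[u ur ->]]; first by rewrite !inE; exists u.
by exists u; rewrite ?inE.
Qed.

Lemma sub_adj_sym (F : {set {set V}}) : symmetric (sub_adj F).
Proof. by move=> x y; rewrite /sub_adj eq_sym setUC. Qed.

Lemma sub_connectedP (F : {set {set V}}) :
  reflect (forall x, connect (sub_adj F) x r) (sub_connected F).
Proof.
apply: (iffP forallP) => [con x|con x]; first exact/forallP.
apply/forallP=> y; apply: connect_trans (con x) _.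
by rewrite (sym_connect_sym (@sub_adj_sym F)).
Qed.

Lemma sub_acyclic_no_cycle (F : {set {set V}}) (s : seq V) :
  sub_acyclic F -> uniq s -> 2 < size s -> ~~ path.cycle (sub_adj F) s.
Proof.
have sz : uniq s -> size s < #|V|.+1 by move=> us; rewrite ltnS -(card_uniqP us) max_card.
move=> /forallP acy us s2; move/forallP/(_ (in_tuple s)): (acy (Ordinal (sz us))).
by rewrite /= s2 us.
Qed.

Lemma depth_eq0 f v : depth f v = 0 -> v = r.
Proof.
rewrite /depth; case: #|V| cardV_gt0 => // k _.
by rewrite big_ord_recl /=; case: eqP.
Qed.

Section OneParentMap.
Variable f : {ffun V -> V}.
Hypothesis f_parent : parent_map f.

Let fr : f r = r. Proof. by case/parent_mapP: f_parent. Qed.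
Let fe : forall v, v != r -> e v (f v). Proof. by case/parent_mapP: f_parent. Qed.
Let fK : forall v, iter #|V| f v = r. Proof. by case/parent_mapP: f_parent. Qed.

Lemma depth_root : depth f r = 0.
Proof. by apply: big1 => j _; rewrite iter_fix ?eqxx. Qed.

Lemma depth_parent v : v != r -> depth f v = (depth f (f v)).+1.
Proof.
move=> vr; rewrite /depth; move: (fK v); case: #|V| cardV_gt0 => // k _ hK.
rewrite big_ord_recl big_ord_recr /= vr -iterSr hK eqxx addn0 add1n.
by congr _.+1; apply: eq_bigr => j _; rewrite -iterS iterSr.
Qed.

Lemma parent_edges_adj (F : {set {set V}}) v :
  parent_edges f \subset F -> v != r -> sub_adj F v (f v).
Proof.
move=> /subsetP sF vr; rewrite /sub_adj; apply/andP; split.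
  by apply: contraTneq (fe vr) => {1}->; rewrite e_irr.
by apply: sF; apply/parent_edgesP; exists v.
Qed.

Lemma parent_edges_connected : sub_connected (parent_edges f).
Proof.
apply/sub_connectedP=> x; rewrite -(fK x).
by apply: connect_iter fr _ _ _ => v; apply: parent_edges_adj.
Qed.

Lemma parent_edge_le_depth x y :
  sub_adj (parent_edges f) x y -> depth f y <= depth f x -> f x = y.
Proof.
case/andP=> _ /parent_edgesP[u ur /set2_eq[[-> ->] // | [-> ->]]].
by rewrite (depth_parent ur) ltnn.
Qed.

(* On a cycle, the vertex of maximal depth would need two distinct parents. *)
Lemma parent_edges_acyclic : sub_acyclic (parent_edges f).
Proof.
apply/forallP=> k; apply/forallP=> t; apply/negP=> /and3P[k2 ut ct].
move: ut ct k2; case: t => s /= /eqP <-; case: s => [|x0 s0] //.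
set s := x0 :: s0 => us cs s2.
have [x xs xmax] := @arg_maxnP _ x0 (mem s) (depth f) (mem_head _ _).
case/rot_to: xs => i s' rs.
have us' : uniq (x :: s') by rewrite -rs rot_uniq.
have cs' : path.cycle (sub_adj (parent_edges f)) (x :: s') by rewrite -rs rot_cycle.
have ss' : 2 < size (x :: s') by rewrite -rs size_rot.
have ms y : y \in x :: s' -> depth f y <= depth f x by rewrite -rs mem_rot => /xmax.
clear rs; case: s' us' cs' ss' ms => [|a s1] // us' cs' ss' ms.
case/lastP: s1 us' cs' ss' ms => [|s3 b] // us' cs' ss' ms.
move: cs'; rewrite /= rcons_path last_rcons => /andP[xa /andP[_ bx]].
have fa : f x = a by apply: parent_edge_le_depth xa (ms a _); rewrite !inE eqxx orbT.
have fb : f x = b.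
  apply: parent_edge_le_depth; first by rewrite sub_adj_sym.
  by apply: ms; rewrite !inE mem_rcons mem_head !orbT.
by move: us'; rewrite /= -fa fb mem_rcons mem_head andbF.
Qed.

Lemma parent_edges_spanning_tree : spanning_tree e (parent_edges f).
Proof.
apply/and3P; split; [|exact: parent_edges_connected|exact: parent_edges_acyclic].
apply/subsetP=> A /parent_edgesP[u ur ->]; rewrite inE.
by apply/existsP; exists u; apply/existsP; exists (f u); rewrite fe ?eqxx.
Qed.
End OneParentMap.

Lemma parent_edges_inj : {in parent_map &, injective parent_edges}.
Proof.
move=> f g fP gP E; have /parent_mapP[fr _ _] := fP; have /parent_mapP[gr _ _] := gP.
suff H j v : depth g v = j -> f v = g v by apply/ffunP => v; apply: (H _ v erefl).
elim: j v => [|j IHj] v dv; first by rewrite (depth_eq0 dv) fr gr.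
have vr : v != r by apply: contra_eq_neq dv => ->; rewrite depth_root.
have dgv : depth g (g v) = j by move: dv; rewrite (depth_parent gP vr) => [[]].
have fgv := IHj _ dgv.
have : [set v; g v] \in parent_edges f by rewrite E; apply/parent_edgesP; exists v.
case/parent_edgesP=> u ur /set2_eq[[<- <-] // | [ev egv]].
have gvr : g v != r by apply: contraNneq vr => gvr; rewrite ev -egv gvr fr.
have ggv : g (g v) = v by rewrite -fgv egv -ev.
move: (depth_parent gP gvr); rewrite ggv dgv dv => /eqP.
by rewrite -addn2 -{1}[j]addn0 eqn_add2l.
Qed.

End ParentMaps.

Section TreeToParentMap.
Variables (V : finType) (e : rel V) (r : V).
Hypotheses (e_sym : symmetric e) (e_irr : irreflexive e).
Variable F : {set {set V}}.
Hypothesis F_edges : F \subset edge_set e.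

Lemma connected_descent : sub_connected F ->
  exists2 d : V -> nat, forall x, d x < #|V| &
    forall x, x != r -> exists2 w, sub_adj F x w & d w < d x.
Proof.
move=> /(sub_connectedP r) con.
have ex_len x : exists n, [exists t : n.-tuple V, path (sub_adj F) x t && (last x t == r)].
  have /connectP[p xp ->] := con x.
  by exists (size p); apply/existsP; exists (in_tuple p); rewrite xp eqxx.
have len_ge x p : path (sub_adj F) x p -> last x p = r -> ex_minn (ex_len x) <= size p.
  move=> xp lp; case: ex_minnP => n _; apply.
  by apply/existsP; exists (in_tuple p); rewrite xp lp eqxx.
exists (fun x => ex_minn (ex_len x)) => x.
  have /connectP[p xp] := con x; case: (shortenP xp) => p' xp' up' _ lp'.
  apply: leq_ltn_trans (len_ge x p' xp' (esym lp')) _.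
  by rewrite -ltnS -[(size p').+1]/(size (x :: p')) -(card_uniqP up') ltnS max_card.
move=> xr; case: ex_minnP => n /existsP[[s sz] /andP[xp /eqP lp]] _.
case: s sz xp lp => [|w p] sz /= xp lp; first by rewrite lp eqxx in xr.
case/andP: xp => xw wp; exists w => //.
by rewrite -(eqP sz); apply: len_ge wp lp.
Qed.

Lemma parent_map_of_descent (d : V -> nat) :
  (forall x, d x < #|V|) -> (forall x, x != r -> exists2 w, sub_adj F x w & d w < d x) ->
  exists2 f, parent_map e r f & forall x, x != r -> sub_adj F x (f x).
Proof.
move=> d_lt d_desc.
pose f := [ffun x => if x == r then r else odflt r [pick w | sub_adj F x w & d w < d x]].
have fr : f r = r by rewrite ffunE eqxx.
have f_desc x : x != r -> sub_adj F x (f x) && (d (f x) < d x).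
  move=> xr; rewrite ffunE (negPf xr); case: pickP => [w //|none].
  by have [w Fxw dw] := d_desc x xr; move: (none w); rewrite Fxw dw.
exists f => [|x /f_desc /andP[] //]; apply/parent_mapP; split=> // [x xr|x].
  have /andP[/andP[_ xF] _] := f_desc x xr.
  have := subsetP F_edges _ xF; rewrite inE => /existsP[a /existsP[b /andP[eab]]].
  by move/eqP/set2_eq=> [[-> ->]|[-> ->]] //; rewrite e_sym.
have reach j : iter j f x = r \/ d (iter j f x) + j <= d x.
  elim: j => [|j [IHj|IHj]]; [by right; rewrite addn0 | by left; rewrite iterS IHj fr|].
  have [fjr|fjr] := eqVneq (f (iter j f x)) r; first by left.
  have jr : iter j f x != r by apply: contraNneq fjr => ->; rewrite fr.
  right; have /andP[_ lt] := f_desc _ jr.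
  by rewrite addnS; apply: leq_trans IHj; rewrite ltn_add2r.
case: (reach #|V|) => // /(leq_trans (leq_addl _ _)).
by rewrite leqNgt d_lt.
Qed.

(* An edge [x; y] of F that is not a parent edge would close a cycle with the
   tree paths from x and y to the root. *)
Lemma tree_parent_edges (f : {ffun V -> V}) :
  sub_acyclic F -> parent_map e r f -> (forall x, x != r -> sub_adj F x (f x)) ->
  F = parent_edges r f.
Proof.
move=> acyF fP f_adj; have /parent_mapP[fr _ fK] := fP.
apply/setP=> A; apply/idP/idP; last by case/parent_edgesP=> u /f_adj /andP[_ uF] ->.
move=> AF; have := subsetP F_edges _ AF.
rewrite inE => /existsP[x /existsP[y /andP[exy /eqP EA]]].
have xy : x != y by apply: contraTneq exy => ->; rewrite e_irr.
have [fxy|fxy] := eqVneq (f x) y.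
  have xr : x != r by apply: contraNneq xy => xr; rewrite -fxy xr fr.
  by rewrite EA -fxy; apply/parent_edgesP; exists x.
have [fyx|fyx] := eqVneq (f y) x.
  have yr : y != r by apply: contraNneq xy => yr; rewrite -fyx yr fr.
  by rewrite EA setUC -fyx; apply/parent_edgesP; exists y.
pose F' := F :\ A.
have adj' v : v != r -> sub_adj F' v (f v).
  move=> vr; have /andP[vf' vF] := f_adj v vr; rewrite /sub_adj vf' !inE vF andbT.
  by apply/eqP; rewrite EA => /set2_eq[[ev efv]|[ev efv]]; [move: fxy | move: fyx];
    rewrite -ev -efv eqxx.
have conF' v : connect (sub_adj F') v r by rewrite -(fK v); exact: (connect_iter fr adj').
have /connectP[p xp ly] : connect (sub_adj F') x y.
  by apply: connect_trans (conF' x) _; rewrite (sym_connect_sym (@sub_adj_sym _ _)).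
case: (shortenP xp) ly => p' xp' up' _ ly; symmetry in ly.
case: p' xp' up' ly => [|y1 [|y2 p3]] xp' up' /= ly.
- by rewrite ly eqxx in xy.
- by move: xp'; rewrite ly /= /sub_adj !inE -EA eqxx !andbF.
case/negP: (sub_acyclic_no_cycle acyF up' isT).
rewrite /path.cycle rcons_path; apply/andP; split.
  by apply: sub_path xp' => a b /andP[ab]; rewrite /sub_adj ab !inE => /andP[].
by rewrite /= ly /sub_adj eq_sym xy setUC -EA.
Qed.

End TreeToParentMap.

Lemma spanning_tree_parent_edges (V : finType) (e : rel V) (r : V) F :
  symmetric e -> irreflexive e -> spanning_tree e F ->
  exists2 f, parent_map e r f & F = parent_edges r f.
Proof.
move=> e_sym e_irr /and3P[F_edges conF acyF].
have [d d_lt d_desc] := connected_descent r conF.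
have [f fP f_adj] := parent_map_of_descent e_sym F_edges d_lt d_desc.
by exists f => //; apply: tree_parent_edges.
Qed.

Lemma tau_parent_maps (V : finType) (e : rel V) (r : V) :
  symmetric e -> irreflexive e -> tau e = #|[set f | parent_map e r f]|.
Proof.
move=> e_sym e_irr; rewrite /tau.
have -> : [set F | spanning_tree e F] = parent_edges r @: [set f | parent_map e r f].
  apply/setP=> F; rewrite inE; apply/idP/imsetP.
    by case/(spanning_tree_parent_edges r e_sym e_irr)=> f fP ->; exists f; rewrite ?inE.
  by case=> f; rewrite inE => fP ->; apply: parent_edges_spanning_tree.
by rewrite card_in_imset // => f g; rewrite !inE; apply: parent_edges_inj.
Qed.

Import GRing.Theory Num.Theory.
Local Open Scope ring_scope.

Definition mx_of_fun (R : Type) (V : finType) (G : V -> V -> R) : 'M[R]_#|V| :=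
  \matrix_(i, j) G (enum_val i) (enum_val j).

Lemma det_mx_of_fun (R : comNzRingType) (V : finType) (G : V -> V -> R) :
  \det (mx_of_fun G) =
  \sum_(s : 'S_#|V|) (-1) ^+ s * \prod_x G x (enum_val (s (enum_rank x))).
Proof.
apply: eq_bigr => s _; congr (_ * _); rewrite (big_enum_val (A := V)).
by apply: eq_bigr => i _; rewrite mxE enum_valK.
Qed.

Lemma sum_delta_mul (R : pzSemiRingType) (T : finType) (a : T) (c : T -> R) :
  \sum_y (y == a)%:R * c y = c a.
Proof.
rewrite (eq_bigr (fun y => if y == a then c y else 0)) => [|y _].
  by rewrite -big_mkcond big_pred1_eq.
by case: eqP; rewrite ?mul1r ?mul0r.
Qed.

Section MatrixTree.
Variables (R : fieldType) (V : finType) (e : rel V) (r : V).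
Hypothesis e_irr : irreflexive e.

Definition rooted_degree (x : V) : nat := if x == r then 1 else #|[set w | e x w]|.

(* The Laplacian of e with the row and column of r replaced by those of the
   identity matrix, so that its determinant is the reduced Laplacian minor. *)
Definition rooted_laplacian : 'M[R]_#|V| := mx_of_fun (fun x y =>
  (x == y)%:R * (rooted_degree x)%:R - [&& x != r, y != r & e x y]%:R).

Definition out_nbhd (x : V) : {set V} := if x == r then [set r] else [set w | e x w].

Definition arc_row (x w y : V) : R := (x == y)%:R - ((y == w) && (w != r))%:R.

Definition arc_matrix (g : {ffun V -> V}) : 'M[R]_#|V| :=
  mx_of_fun (fun x => arc_row x (g x)).

Lemma arc_row_sum x w (c : V -> R) :
  \sum_y arc_row x w y * c y = c x - (w != r)%:R * c w.
Proof.
rewrite /arc_row; under eq_bigr => y _ do rewrite mulrBl [x == y]eq_sym -mulnb natrM -mulrA.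
by rewrite sumrB !sum_delta_mul mulrC.
Qed.

Lemma rooted_laplacian_arcs :
  rooted_laplacian = mx_of_fun (fun x y => \sum_(w in out_nbhd x) arc_row x w y).
Proof.
apply/matrixP=> i j; rewrite !mxE /rooted_degree /out_nbhd.
set x := enum_val i; set y := enum_val j.
have [->|xr] := eqVneq x r; first by rewrite big_set1 /arc_row eqxx andbF mulr1.
rewrite /arc_row sumrB sumr_const mulr_natr; congr (_ - _).
rewrite big_mkcond (eq_bigr (fun w => (w == y)%:R * ((y != r) && e x y)%:R)).
  by rewrite sum_delta_mul.
move=> w _; rewrite inE [y == w]eq_sym.
have [->|_] := eqVneq w y.
  by case: (e x y); case: (y != r); rewrite /= ?(mulr1n, mulr0n, mul1r, mul0r).
by case: (e x w); rewrite /= ?(mulr0n, mul0r).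
Qed.

Lemma det_rooted_laplacian_arcs :
  \det rooted_laplacian = \sum_(g in family out_nbhd) \det (arc_matrix g).
Proof.
rewrite rooted_laplacian_arcs det_mx_of_fun.
under eq_bigr => s _ do rewrite bigA_distr_big_dep mulr_sumr.
by rewrite exchange_big; apply: eq_bigr => g _; rewrite det_mx_of_fun.
Qed.

Lemma family_out_nbhd g :
  (g \in family out_nbhd) = (g r == r) && [forall v, (v != r) ==> e v (g v)].
Proof.
apply/familyP/andP => [gP|[/eqP gr /forallP ge] x].
  split; first by move: (gP r); rewrite /out_nbhd eqxx inE.
  by apply/forallP => v; apply/implyP => vr; move: (gP v); rewrite /out_nbhd (negPf vr) inE.
rewrite /out_nbhd; have [->|xr] := eqVneq x r; first by rewrite gr inE.
by rewrite inE; apply: (implyP (ge x)).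
Qed.

(* A permutation t with a nonzero term sends every vertex x it moves to g x;
   following the arcs from a moved vertex, t would end up moving the root. *)
Lemma det_arc_matrix_parent g : parent_map e r g -> \det (arc_matrix g) = 1.
Proof.
case/parent_mapP=> gr ge gK; rewrite det_mx_of_fun (bigD1 1%g) //= odd_perm1 mul1r.
rewrite [X in _ + X]big1 ?addr0 => [|s s1].
  apply: big1 => x _; rewrite perm1 enum_rankK /arc_row eqxx.
  have [->|xr] := eqVneq x r; first by rewrite gr eqxx andbF subr0.
  have /negPf -> : x != g x by apply: contraTneq (ge x xr) => <-; rewrite e_irr.
  by rewrite subr0.
apply/eqP; rewrite mulf_eq0; apply/orP; right; apply/prodf_eq0.
pose t x := enum_val (s (enum_rank x)).
suff /existsP[y y0] : [exists y, arc_row y (g y) (t y) == 0] by exists y.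
have t_inj : injective t by move=> x y /enum_val_inj /perm_inj /enum_rank_inj.
have [x0 tx0] : exists x, t x != x.
  apply/existsP; apply: contraR s1 => /existsPn fix_t; apply/eqP/permP => i.
  rewrite perm1; apply: enum_val_inj; apply/eqP.
  by move: (fix_t (enum_val i)); rewrite negbK /t enum_valK.
apply: contraT => /existsPn nz.
have arc y : t y != y -> t y = g y /\ g y != r.
  move=> ty; move: (nz y); rewrite /arc_row [y == _]eq_sym (negPf ty) sub0r oppr_eq0.
  by case: (t y =P g y) => [->|_]; case: (g y != r); rewrite /= ?mulr0n ?eqxx.
have moved j : t (iter j g x0) != iter j g x0.
  elim: j => [//|j IHj] /=; have [tg _] := arc _ IHj.
  apply: contra_neq _ IHj => tgj.
  by rewrite tg; apply: t_inj; rewrite tgj tg.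
by have [_] := arc _ (moved #|V|); rewrite gK gr eqxx.
Qed.

(* The vertices that never reach the root form a nonempty set closed under g;
   its indicator vector lies in the kernel of the arc matrix. *)
Lemma det_arc_matrix_cycle (g : {ffun V -> V}) :
  g r = r -> (exists x, iter #|V| g x != r) -> \det (arc_matrix g) = 0.
Proof.
move=> gr [x0 x0S]; pose S := [set x | iter #|V| g x != r].
have gS x : (g x \in S) = (x \in S).
  rewrite !inE; apply/negb_inj; rewrite !negbK; apply/eqP/eqP => xr.
    by apply: (iter_card_fix (j := #|V|.+1) gr); rewrite iterSr.
  by rewrite -iterSr iterS xr gr.
apply/eqP; rewrite -det_tr; apply/det0P; exists (\row_j (enum_val j \in S)%:R).
  apply/eqP => /rowP /(_ (enum_rank x0)); rewrite !mxE enum_rankK inE x0S.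
  by move/eqP; rewrite oner_eq0.
apply/rowP=> i; rewrite !mxE.
transitivity (\sum_y arc_row (enum_val i) (g (enum_val i)) y * (y \in S)%:R).
  by rewrite (big_enum_val (A := V)); apply: eq_bigr => j _; rewrite !mxE mulrC.
rewrite arc_row_sum; have [gxr|gxr] := eqVneq (g (enum_val i)) r.
  by rewrite -gS gxr inE iter_fix // eqxx mul0r subr0.
by rewrite gS mul1r subrr.
Qed.

Theorem det_rooted_laplacian_parent_maps :
  \det rooted_laplacian = #|[set f | parent_map e r f]|%:R.
Proof.
rewrite det_rooted_laplacian_arcs.
transitivity (\sum_(g in family out_nbhd | parent_map e r g) 1 : R).
  rewrite big_mkcondr; apply: eq_bigr => g; rewrite family_out_nbhd => /andP[/eqP gr ge].
  case: ifP => [gP|gNP]; first exact: det_arc_matrix_parent.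
  apply: det_arc_matrix_cycle => //; move: gNP.
  by rewrite /parent_map gr eqxx ge /= => /negbT /forallPn[x xS]; exists x.
rewrite sumr_const; congr (_ *+ _); apply: eq_card => g; rewrite !inE.
by apply: andb_idl => /and3P[gr ge _]; rewrite family_out_nbhd gr ge.
Qed.
End MatrixTree.

Corollary matrix_tree_theorem (R : fieldType) (V : finType) (e : rel V) (r : V) :
  symmetric e -> irreflexive e -> \det (rooted_laplacian R e r) = (tau e)%:R.
Proof.
by move=> e_sym e_irr; rewrite det_rooted_laplacian_parent_maps // (tau_parent_maps r).
Qed.

Lemma sylvester_det (R : comNzRingType) n k (A : 'M[R]_(n, k)) (B : 'M[R]_(k, n)) :
  \det (1%:M - A *m B) = \det (1%:M - B *m A).
Proof.
have E1 : block_mx 1%:M A B 1%:M =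
    block_mx 1%:M 0 B 1%:M *m block_mx 1%:M A 0 (1%:M - B *m A).
  by rewrite mulmx_block !mul1mx !mul0mx ?mulmx0 !mulmx1 ?addr0 ?add0r addrC subrK.
have E2 : block_mx 1%:M A B 1%:M =
    block_mx (1%:M - A *m B) A 0 1%:M *m block_mx 1%:M 0 B 1%:M.
  by rewrite mulmx_block !mul1mx !mul0mx ?mulmx0 !mulmx1 ?addr0 ?add0r subrK.
have := congr1 determinant E1; rewrite E2 !det_mulmx ?det_lblock ?det_ublock ?det1.
by rewrite !mul1r !mulr1 => ->.
Qed.

Lemma det_diag_sub_mulmx (R : fieldType) n k (d : 'I_n -> R)
    (A : 'M[R]_(n, k)) (B : 'M[R]_(k, n)) :
  (forall i, d i != 0) ->
  \det (diag_mx (\row_i d i) - A *m B) =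
  (\prod_i d i) * \det (1%:M - B *m \matrix_(i, l) (A i l / d i)).
Proof.
move=> d_nz.
have -> : diag_mx (\row_i d i) - A *m B =
    diag_mx (\row_i d i) *m (1%:M - \matrix_(i, l) (A i l / d i) *m B).
  rewrite mulmxBr mulmx1 mulmxA; congr (_ - _ *m _); apply/matrixP=> i l.
  by rewrite mul_diag_mx !mxE mulrCA divff ?mulr1.
rewrite det_mulmx det_diag sylvester_det; congr (_ * _).
by apply: eq_bigr => i _; rewrite mxE.
Qed.

Lemma det_1_sub_offdiag (R : fieldType) k (s : 'I_k -> R) :
  (forall u, 1 + s u != 0) ->
  \det (1%:M - \matrix_(u, t) ((t != u)%:R * s t)) =
  (\prod_u (1 + s u)) * (1 - \sum_u s u / (1 + s u)).
Proof.
move=> s_nz.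
have -> : 1%:M - \matrix_(u, t) ((t != u)%:R * s t) =
    diag_mx (\row_u (1 + s u)) - const_mx 1 *m (\row_t s t : 'rV[R]_k).
  apply/matrixP => u t; rewrite !mxE big_ord1 !mxE mul1r.
  by have [->|ut] := eqVneq u t; rewrite /= ?(mul0r, subr0, mulr1n, addrK, mul1r, mulr0n).
rewrite det_diag_sub_mulmx // det_mx11 !mxE eqxx; congr (_ * (_ - _)).
by apply: eq_bigr => u _; rewrite !mxE mul1r.
Qed.

Section CompleteMultipartite.
Variables (R : numFieldType) (V : finType) (e : rel V) (k : nat) (part : V -> 'I_k) (r : V).
Hypothesis e_part : forall x y, e x y = (part x != part y).

Definition part_degree (t : 'I_k) : nat := #|[set w | part w != t]|.
Definition nonroot_size (t : 'I_k) : nat := #|[set x | (x != r) && (part x == t)]|.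

Lemma part_degreeE t : part_degree t = (#|V| - #|[set x | part x == t]|)%N.
Proof.
rewrite -(cardsC [set x | part x == t]) addKn; apply: eq_card => x.
by rewrite !inE.
Qed.

Lemma nonroot_sizeE t : nonroot_size t = (#|[set x | part x == t]| - (part r == t))%N.
Proof.
rewrite (cardsD1 r [set x | part x == t]) inE addKn; apply: eq_card => x.
by rewrite !inE.
Qed.

Hypothesis part_degree_gt0 : forall t, (0 < part_degree t)%N.

Lemma rooted_degree_part x : x != r -> rooted_degree e r x = part_degree (part x).
Proof.
rewrite /rooted_degree => /negPf ->; apply: eq_card => w.
by rewrite !inE e_part eq_sym.
Qed.

Let d (x : V) : R := (rooted_degree e r x)%:R.

Let d_nz x : d x != 0.
Proof.
rewrite pnatr_eq0 -lt0n; have [->|xr] := eqVneq x r; first by rewrite /rooted_degree eqxx.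
by rewrite rooted_degree_part.
Qed.

Definition part_incidence : 'M[R]_(#|V|, k) :=
  \matrix_(i, t) ((enum_val i != r) && (part (enum_val i) == t))%:R.
Definition copart_incidence : 'M[R]_(k, #|V|) :=
  \matrix_(t, j) ((enum_val j != r) && (part (enum_val j) != t))%:R.

Lemma rooted_laplacian_multipartite :
  rooted_laplacian R e r =
  diag_mx (\row_i d (enum_val i)) - part_incidence *m copart_incidence.
Proof.
apply/matrixP=> i j; rewrite !mxE (inj_eq enum_val_inj) mulr_natl; congr (_ - _).
rewrite (bigD1 (part (enum_val i))) //= big1 ?addr0 => [|t ti]; last first.
  by rewrite !mxE [part _ == t]eq_sym (negPf ti) andbF mul0r.
by rewrite !mxE eqxx andbT e_part -natrM mulnb [part (enum_val j) == _]eq_sym.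
Qed.

Definition part_weight (t : 'I_k) : R := (nonroot_size t)%:R / (part_degree t)%:R.

Lemma copart_mul_scaled_part :
  copart_incidence *m \matrix_(i, t) (part_incidence i t / d (enum_val i)) =
  \matrix_(u, t) ((t != u)%:R * part_weight t).
Proof.
apply/matrixP=> u t; rewrite !mxE.
transitivity (\sum_x (t != u)%:R *
  (((x != r) && (part x == t))%:R / (part_degree t)%:R) : R).
  rewrite (big_enum_val (A := V)); apply: eq_bigr => i _; rewrite !mxE.
  have [xt|_] := eqVneq (part (enum_val i)) t; last by rewrite andbF /= !mul0r !mulr0.
  rewrite andbT; have [->|xr] := eqVneq (enum_val i) r; first by rewrite /= !mul0r !mulr0.
  by rewrite /= mul1r /d rooted_degree_part // xt mul1r.
rewrite -mulr_sumr -mulr_suml -natr_sum /part_weight /nonroot_size -sum1dep_card.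
by congr (_ * (_%:R / _)); rewrite [RHS]big_mkcond; apply: eq_bigr => x _; case: (_ && _).
Qed.

Lemma prod_rooted_degree :
  \prod_(i < #|V|) d (enum_val i) = \prod_t (part_degree t)%:R ^+ nonroot_size t.
Proof.
rewrite -(big_enum_val (A := V) d) (bigD1 r) //= {1}/d /rooted_degree eqxx mul1r.
rewrite (partition_big part xpredT) //=; apply: eq_bigr => t _.
rewrite (eq_bigr (fun=> (part_degree t)%:R)) => [|x /andP[xr /eqP <-]]; last first.
  by rewrite /d rooted_degree_part.
by rewrite prodr_const /nonroot_size cardsE.
Qed.

Theorem det_rooted_laplacian_multipartite :
  \det (rooted_laplacian R e r) =
  (\prod_t (part_degree t)%:R ^+ nonroot_size t) *
  ((\prod_t (1 + part_weight t)) * (1 - \sum_t part_weight t / (1 + part_weight t))).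
Proof.
rewrite rooted_laplacian_multipartite det_diag_sub_mulmx // prod_rooted_degree.
rewrite copart_mul_scaled_part det_1_sub_offdiag // => t.
by apply: lt0r_neq0; rewrite ltr_pwDl ?ltr01 ?divr_ge0 ?ler0n.
Qed.
End CompleteMultipartite.

Local Close Scope ring_scope.

Section JoinBipartite.
Variables m n p q : nat.
Local Notation V := (('I_m + 'I_n) + ('I_p + 'I_q))%type.

Definition join_part (x : V) : 'I_4 :=
  match x with
  | inl (inl _) => @Ordinal 4 0 isT | inl (inr _) => @Ordinal 4 1 isT
  | inr (inl _) => @Ordinal 4 2 isT | inr (inr _) => @Ordinal 4 3 isT
  end.

Lemma join_kbip_relE x y :
  join_rel (kbip_rel m n) (kbip_rel p q) x y = (join_part x != join_part y).
Proof. by case: x => [[a|a]|[a|a]]; case: y => [[b|b]|[b|b]]. Qed.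

Lemma card_join_part t : #|[set x | join_part x == t]| = nth 0 [:: m; n; p; q] t.
Proof.
rewrite -sum1dep_card big_mkcond /= !big_sumType /=.
by case: t => [[|[|[|[|t]]]] //= _]; rewrite !sum_nat_const !card_ord; lia.
Qed.

Lemma part_degree_join t :
  part_degree join_part t = nth 0 [:: n + p + q; m + p + q; m + n + q; m + n + p] t.
Proof.
rewrite part_degreeE card_join_part !card_sum !card_ord.
by case: t => [[|[|[|[|t]]]] //= _]; lia.
Qed.

Lemma nonroot_size_join (r0 : 'I_m) t :
  nonroot_size join_part (inl (inl r0)) t = nth 0 [:: m.-1; n; p; q] t.
Proof.
rewrite nonroot_sizeE card_join_part.
by case: t => [[|[|[|[|t]]]] //= _]; rewrite ?subn0 ?subn1.
Qed.
End JoinBipartite.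

Theorem corollary4p2 (m n p q : nat) :
  0 < m -> 0 < n -> 0 < p -> 0 < q ->
  tau (join_rel (kbip_rel m n) (kbip_rel p q)) =
  (m + n + p + q) ^ 2 * (m + p + q) ^ (n - 1) * (n + p + q) ^ (m - 1)
    * (p + m + n) ^ (q - 1) * (q + m + n) ^ (p - 1).
Proof.
case: m => // m; case: n => // n; case: p => // p; case: q => // q _ _ _ _.
set e := join_rel _ _.
have e_part x y : e x y = (join_part x != join_part y) := join_kbip_relE x y.
have e_sym : symmetric e by move=> x y; rewrite !e_part eq_sym.
have e_irr : irreflexive e by move=> x; rewrite e_part eqxx.
apply/eqP; rewrite -(eqr_nat rat) -(matrix_tree_theorem _ (inl (inl ord0)) e_sym e_irr).
rewrite (det_rooted_laplacian_multipartite _ (inl (inl ord0)) e_part).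
rewrite !big_ord_recl !big_ord0 /part_weight !part_degree_join !nonroot_size_join /=.
have -> : (p.+1 + m.+1 + n.+1 = m.+1 + n.+1 + p.+1)%N by lia.
have -> : (q.+1 + m.+1 + n.+1 = m.+1 + n.+1 + q.+1)%N by lia.
rewrite !subn1 /= !natrM !natrX !exprS.
set P0 := (_ ^+ m)%R; set P1 := (_ ^+ n)%R; set P2 := (_ ^+ p)%R; set P3 := (_ ^+ q)%R.
rewrite !natrD !mulrS; apply/eqP; field.
  by rewrite -!mulrS -!natrD !pnatr_eq0 !addSn /= ?addnS.
by move=> t; rewrite part_degree_join; case: t => [[|[|[|[|t]]]]].
Qed.
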